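(* Let $V$ be a nonempty set, $T:V\to V$, and let $l\ge0$ be an integer with $|T^l(V)|=|T^{l+1}(V)|=m<\infty$. Then $T^{m!+l}=T^l$. If moreover $V$ is a vector space over a field $F$, then $T$ has a vanishing polynomial of degree at most $m^2+l$.
   Context: $T^0$ is the identity and $T^i=T\circ T^{i-1}$. For a vector space $V$ over $F$ and a (not necessarily linear) $T:V\to V$, $p(T)$ for $p(x)=\sum a_ix^i$ is the map $v\mapsto\sum a_iT^i(v)$; a vanishing polynomial of $T$ is a nonzero $p\in F[x]$ with $p(T)(v)=0$ for all $v\in V$. *)

From HB Require Import structures.
From mathcomp Require Import all_boot all_order all_algebra.
Set Implicit Arguments. Unset Strict Implicit. Unset Printing Implicit Defensive.
Import GRing.Theory.
Local Open Scope ring_scope.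

(* T^i is [iter i T]: iter 0 T = id, iter i.+1 T = T \o iter i T. *)

Definition iter_image (V : Type) (T : V -> V) (i : nat) : V -> Prop :=
  fun x => exists v : V, iter i T v = x.

Definition has_card (V : Type) (A : V -> Prop) (m : nat) : Prop :=
  exists f : 'I_m -> V, injective f /\ (forall x, A x <-> exists i, f i = x).

Definition poly_app (F : fieldType) (V : lmodType F) (p : {poly F})
    (T : V -> V) (v : V) : V :=
  \sum_(i < size p) p`_i *: iter i T v.

Definition vanishing_poly (F : fieldType) (V : lmodType F) (p : {poly F})
    (T : V -> V) : Prop :=
  p != 0 /\ forall v : V, poly_app p T v = 0.

(* Since |T^(l+1)(V)| = |T^l(V)| = m and T maps T^l(V) onto T^(l+1)(V),
   T is injective on the finite set T^l(V), which T maps into itself. By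
   pigeonhole every w in T^l(V) then satisfies T^c(w) = w for some
   1 <= c <= m, and c divides m!, whence T^(m!) is the identity on T^l(V),
   i.e. T^(m!+l) = T^l. For the same reason X^l (X - 1)(X^2 - 1)...(X^m - 1),
   of degree at most l + m^2, annihilates T: applied to v it is
   (X - 1)...(X^m - 1) applied to w = T^l(v), and w is killed by the factor
   X^c - 1 for its period c. *)
From HB Require Import structures.
From mathcomp Require Import all_boot all_order all_algebra.
From Stdlib Require Import ClassicalEpsilon.
Set Implicit Arguments. Unset Strict Implicit. Unset Printing Implicit Defensive.
Local Open Scope ring_scope.
Import GRing.Theory.

Section FiniteSets.
Variables (U W : Type).

Lemma has_card_onto_inj (A : U -> Prop) (B : W -> Prop) (f : U -> W) m :
  has_card A m -> has_card B m ->
  (forall y, B y -> exists2 x, A x & f x = y) ->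
  forall x y, A x -> A y -> f x = f y -> x = y.
Proof.
case=> [a [a_inj aA]] [b [b_inj bB]] f_onto.
have pre j : exists i, f (a i) = b j.
  have [x Ax <-] := f_onto _ (proj2 (bB _) (ex_intro _ j erefl)).
  by have [i <-] := proj1 (aA x) Ax; exists i.
pose s j := proj1_sig (constructive_indefinite_description _ (pre j)).
have sE j : f (a (s j)) = b j by rewrite /s; case: constructive_indefinite_description.
have s_inj : injective s by move=> j k e; apply: b_inj; rewrite -!sE e.
move=> _ _ /aA[i <-] /aA[i' <-].
have /codomP[j ->] := injF_onto s_inj i.
have /codomP[k ->] := injF_onto s_inj i'.
by rewrite !sE => /b_inj ->.
Qed.

Lemma has_card_pigeonhole (A : U -> Prop) m n (u : 'I_n -> U) :
  has_card A m -> (m < n)%N -> (forall i, A (u i)) ->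
  exists i j : 'I_n, (i < j)%N /\ u i = u j.
Proof.
case=> [a [_ aA]] lt_mn Au.
have pre i : exists k, a k = u i by apply/aA.
pose k i := proj1_sig (constructive_indefinite_description _ (pre i)).
have kE i : a (k i) = u i by rewrite /k; case: constructive_indefinite_description.
have /injectivePn[i [j neq_ij eq_kij]] : ~~ injectiveb k.
  by apply/injectiveP => /leq_card; rewrite !card_ord leqNgt lt_mn.
have eq_uij : u i = u j by rewrite -!kE eq_kij.
case: (ltngtP i j) => [lt_ij|lt_ji|/val_inj eq_ij].
- by exists i, j.
- by exists j, i.
- by rewrite eq_ij eqxx in neq_ij.
Qed.

Lemma has_card_periodic (A : U -> Prop) (f : U -> U) m w :
  has_card A m -> (forall x, A x -> A (f x)) ->
  (forall x y, A x -> A y -> f x = f y -> x = y) ->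
  A w -> exists c, (0 < c <= m)%N /\ iter c f w = w.
Proof.
move=> cardA fA f_inj Aw.
have A_iter n x : A x -> A (iter n f x) by elim: n => //= n IHn /IHn /fA.
have iter_inj n x y : A x -> A y -> iter n f x = iter n f y -> x = y.
  elim: n => //= n IHn Ax Ay /f_inj e.
  by apply: IHn => //; apply: e; apply: A_iter.
have [i [j [lt_ij eq_ij]]] :=
  has_card_pigeonhole (u := fun i : 'I_m.+1 => iter i f w) cardA (ltnSn m)
    (fun _ => A_iter _ _ Aw).
exists (j - i)%N; split.
  by rewrite subn_gt0 lt_ij (leq_trans (leq_subr _ _)) // -ltnS.
apply: (iter_inj i) => //; first exact: A_iter.
by rewrite -iterD subnKC ?(ltnW lt_ij).
Qed.

End FiniteSets.

Lemma iter_image_periodic (V : Type) (T : V -> V) l m :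
  has_card (iter_image T l) m -> has_card (iter_image T l.+1) m ->
  forall v, exists c, (0 < c <= m)%N /\ iter c T (iter l T v) = iter l T v.
Proof.
move=> cardI cardJ v.
have T_closed x : iter_image T l x -> iter_image T l (T x).
  by case=> u <-; exists (T u); rewrite -iterSr.
have T_onto y : iter_image T l.+1 y -> exists2 x, iter_image T l x & T x = y.
  by case=> u <-; exists (iter l T u) => //; exists u.
apply: (has_card_periodic cardI T_closed); last by exists v.
exact: has_card_onto_inj cardI cardJ T_onto.
Qed.

Lemma iter_fact_periodic (V : Type) (f : V -> V) c m w :
  (0 < c <= m)%N -> iter c f w = w -> iter m`! f w = w.
Proof.
by move=> /dvdn_fact/dvdnP[k ->] fw; rewrite iterM; apply: iter_fix.
Qed.

Section PolyApp.
Variables (F : fieldType) (V : lmodType F) (T : V -> V).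

Lemma poly_app_widen (p : {poly F}) N v : (size p <= N)%N ->
  poly_app p T v = \sum_(i < N) p`_i *: iter i T v.
Proof.
move=> le_pN; rewrite /poly_app (big_ord_widen _ (fun i => p`_i *: iter i T v) le_pN) big_mkcond /=.
apply: eq_bigr => i _; case: ltnP => // /(nth_default 0) ->.
by rewrite scale0r.
Qed.

Lemma poly_appB (p q : {poly F}) v :
  poly_app (p - q) T v = poly_app p T v - poly_app q T v.
Proof.
have le_size (r : {poly F}) : (size r <= maxn (size p) (size q))%N -> poly_app r T v =
    \sum_(i < maxn (size p) (size q)) r`_i *: iter i T v.
  exact: poly_app_widen.
rewrite !le_size ?leq_maxl ?leq_maxr //; last first.
  by rewrite (leq_trans (size_polyD _ _)) // size_polyN.
by rewrite -sumrB; apply: eq_bigr => i _; rewrite coefB scalerBl.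
Qed.

Lemma poly_app_mulXn (p : {poly F}) n v :
  poly_app (p * 'X^n) T v = poly_app p T (iter n T v).
Proof.
have le_size : (size (p * 'X^n)%R <= n + size p)%N.
  by rewrite (leq_trans (size_polyMleq _ _)) // size_polyXn addnS addnC.
rewrite (poly_app_widen v le_size) big_split_ord /= big1 ?add0r; last first.
  by move=> i _; rewrite coefMXn ltn_ord scale0r.
apply: eq_bigr => i _.
by rewrite coefMXn ltnNge leq_addr /= addKn addnC iterD.
Qed.

Lemma poly_app_period (r : {poly F}) c w :
  iter c T w = w -> poly_app (r * ('X^c - 1)) T w = 0.
Proof. by move=> Tcw; rewrite mulrBr mulr1 poly_appB poly_app_mulXn Tcw subrr. Qed.

End PolyApp.

Lemma size_prod_XnsubC_le (F : fieldType) m :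
  (size ((\prod_(c < m) ('X^(c.+1) - 1))%R : {poly F}) <= (m ^ 2).+1)%N.
Proof.
rewrite size_prod; last by move=> c _; rewrite monic_neq0 ?monicXnsubC.
rewrite leq_subLR addnS ltnS.
under eq_bigr do rewrite size_XnsubC //.
apply: (@leq_trans (\sum_(c < m) m.+1)); first by apply: leq_sum => c _; exact: ltn_ord.
by rewrite sum_nat_const card_ord mulnS mulnn.
Qed.

Theorem mainTheorem15 :
  (forall (V : Type) (T : V -> V) (l m : nat),
      inhabited V ->
      has_card (iter_image T l) m ->
      has_card (iter_image T l.+1) m ->
      forall v : V, iter (m`! + l) T v = iter l T v)
  /\
  (forall (F : fieldType) (V : lmodType F) (T : V -> V) (l m : nat),
      has_card (iter_image T l) m ->
      has_card (iter_image T l.+1) m ->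
      exists p : {poly F},
        vanishing_poly p T /\ (size p <= (m ^ 2 + l).+1)%N).
Proof.
split=> [V T l m _ cardI cardJ v | F V T l m cardI cardJ].
  have [c [c_range periodic]] := iter_image_periodic cardI cardJ v.
  by rewrite iterD (iter_fact_periodic c_range periodic).
pose q : {poly F} := \prod_(c < m) ('X^(c.+1) - 1).
have q_monic : q \is monic by apply: monic_prod => c _; apply: monicXnsubC.
exists (q * 'X^l); split; first split.
- by rewrite monic_neq0 // monicMl ?monicXn.
- move=> v; rewrite poly_app_mulXn.
  have [c [/andP[c_gt0 c_le] periodic]] := iter_image_periodic cardI cardJ v.
  have c_ord : (c.-1 < m)%N by rewrite prednK.
  rewrite /q (bigD1 (Ordinal c_ord)) //= prednK // mulrC.
  exact: poly_app_period.
- rewrite (leq_trans (size_polyMleq _ _)) // size_polyXn addnS /=.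
  by rewrite -addSn leq_add2r size_prod_XnsubC_le.
Qed.
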